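(* Let $X$ be a metric space, $1\le p<\infty$, $c>0$, and assume $0<\epsilon_{X;p}(S)<\infty$ for all $S\ge c$. Let $f\colon[c,\infty)\to[0,\infty)$ be non-decreasing with $$\int_c^\infty\epsilon_{X;p}(S)^p\,d\big(f(S)^p\big)<\infty .$$ Then there exist a Borel measure $\mu$ on $[c,\infty)$, a Lipschitz map $\theta\colon X\to L^p([c,\infty),\mu;\ell^p(X))$ and a non-decreasing function $\rho$ with $\rho\succeq f$ such that $\|\theta(x)-\theta(y)\|_p\ge\rho(d(x,y))$ for all $x,y\in X$.
   Context: For a metric space $(X,d)$ and $1\le p<\infty$, $\ell^p(X)$ is the space of $p$-summable real functions on $X$ and $\ell^p_1(X)$ its unit sphere. For a map $\xi\colon X\to\ell^p(X)$, written $x\mapsto\xi_x$, put $S(\xi)=\sup\{d(x,y):\xi_x(y)\neq0\}$ and $\varepsilon(\xi;p)=\sup_{x\ne y}\|\xi_x-\xi_y\|_p/d(x,y)$. The profile is $\epsilon_{X;p}(S)=\inf\{\varepsilon(\xi;p):\xi\colon X\to\ell^p_1(X),\ S(\xi)\le S\}$. For non-negative monotone functions $f,g$, $f\succeq g$ means there are constants $C,D>0$ with $f(t)\ge Cg(Dt)$ for all sufficiently large $t$. The integral is a Lebesgue–Stieltjes integral with respect to $f^p$. *)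

From HB Require Import structures.
From mathcomp Require Import all_boot all_order all_algebra.
From mathcomp Require Import all_classical all_reals all_analysis.
Set Implicit Arguments.
Unset Strict Implicit.
Unset Printing Implicit Defensive.
Import Order.TTheory GRing.Theory Num.Theory.
Import numFieldNormedType.Exports.
Local Open Scope classical_set_scope.
Local Open Scope ring_scope.

Section LpDefs.
Context {R : realType} {X : choiceType}.

Definition is_metric (d : X -> X -> R) : Prop :=
  [/\ (forall x y, 0 <= d x y),
      (forall x y, d x y = 0 <-> x = y),
      (forall x y, d x y = d y x) &
      (forall x y z, d x z <= d x y + d y z)].

Definition lp_pow (p : R) (g : X -> R) : \bar R :=
  \esum_(y in [set: X]) ((`|g y| `^ p)%:E).

Definition in_lp (p : R) (g : X -> R) : Prop := (lp_pow p g < +oo)%E.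

(** the l^p norm (meaningful for g in l^p(X)) *)
Definition lp_norm (p : R) (g : X -> R) : R := (fine (lp_pow p g)) `^ p^-1.

Definition in_lp1 (p : R) (g : X -> R) : Prop := in_lp p g /\ lp_norm p g = 1.

Definition supp_radius (d : X -> X -> R) (xi : X -> X -> R) : \bar R :=
  ereal_sup [set r | exists x y, xi x y != 0 /\ r = (d x y)%:E].

Definition eps_xi (d : X -> X -> R) (p : R) (xi : X -> X -> R) : \bar R :=
  ereal_sup [set r | exists x y, x <> y /\
     r = (lp_norm p (fun z => xi x z - xi y z) / d x y)%:E].

Definition eps_profile (d : X -> X -> R) (p : R) (S : R) : \bar R :=
  ereal_inf [set e | exists xi : X -> X -> R,
     [/\ (forall x, in_lp1 p (xi x)), (supp_radius d xi <= S%:E)%E &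
         e = eps_xi d p xi]].

Definition lp_simple (p : R) (D : set R) (s : R -> X -> R) : Prop :=
  [/\ finite_set (s @` D),
      (forall v, measurable (D `&` s @^-1` [set v] : set (measurableTypeR R))) &
      (forall t, D t -> in_lp p (s t)) ].

Definition strongly_measurable (mu : {measure set (measurableTypeR R) -> \bar R})
    (p : R) (D : set R) (g : R -> X -> R) : Prop :=
  exists s : nat -> R -> X -> R, (forall n, lp_simple p D (s n)) /\
    {ae mu, forall t, D t ->
       (fun n => lp_norm p (fun y => s n t y - g t y)) @ \oo --> (0 : R)}.

Definition in_Lp_lp (mu : {measure set (measurableTypeR R) -> \bar R})
    (p : R) (D : set R) (g : R -> X -> R) : Prop :=
  [/\ (forall t, D t -> in_lp p (g t)),
      strongly_measurable mu p D g &
      (\int[mu]_(t in D) ((lp_norm p (g t)) `^ p)%:E < +oo)%E].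

Definition Lp_lp_dist (mu : {measure set (measurableTypeR R) -> \bar R})
    (p : R) (D : set R) (g h : R -> X -> R) : \bar R :=
  poweR (\int[mu]_(t in D)
           ((lp_norm p (fun y => g t y - h t y)) `^ p)%:E) p^-1.

End LpDefs.

(** right-continuous regularization of t |-> f(t)^p, where f is defined on
    [c, +oo) and extended by the constant f(c) to the left of c; its
    Lebesgue--Stieltjes measure is the measure d(f^p) *)
Definition rc_pow {R : realType} (f : R -> R) (p c : R) (t : R) : R :=
  inf [set (f (Num.max s c)) `^ p | s in `]t, +oo[%classic].

Definition succeq {R : realType} (rho f : R -> R) : Prop :=
  exists C D : R, [/\ 0 < C, 0 < D &
    exists T : R, forall t, T <= t -> C * f (D * t) <= rho t].

From HB Require Import structures.
From mathcomp Require Import all_boot all_order all_algebra.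
From mathcomp Require Import all_classical all_reals all_analysis.
From mathcomp Require Import lra measurable_realfun.
Import Order.TTheory GRing.Theory Num.Theory.
Import numFieldNormedType.Exports.
Local Open Scope classical_set_scope.
Local Open Scope ring_scope.

(** For each dyadic scale a_k = c 2^k pick a map xi_k : X -> l^p_1(X) with support
    radius at most a_k and eps(xi_k) <= 2 eps_{X;p}(a_k).  Let mu put the mass
    w_k = F(a_k) - F(a_{k-1}) of d(f^p) on the atom c + k, and let theta(x) equal
    xi_k(x) - xi_k(x0) on that atom (x0 a basepoint), so that
      ||theta(x) - theta(y)||^p = sum_k w_k ||xi_k(x) - xi_k(y)||^p.
    Each term is at most w_k (2 eps_{X;p}(a_k) d(x,y))^p, and since the profile is
    nonincreasing the series sum_k w_k eps_{X;p}(a_k)^p is dominated by the Stieltjes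
    integral, so theta is Lipschitz.  Conversely, when 2 a_k < d(x,y) the maps xi_k(x)
    and xi_k(y) have disjoint supports, so the k-th term is at least w_k; summing over
    the scales a_k <= d(x,y)/4 gives at least F(a_n) >= f(a_n)^p >= f(d(x,y)/8)^p. *)

Lemma esumZl_le {R : realType} {T : choiceType} (k : R) (a : T -> \bar R) :
  0 <= k -> (forall x, 0 <= a x)%E ->
  (\esum_(i in [set: T]) (k%:E * a i) <= k%:E * \esum_(i in [set: T]) a i)%E.
Proof.
move=> k0 a0; apply: ge_ereal_sup => _ [Y [finY _] <-].
rewrite -ge0_mule_fsumr//; apply: lee_wpmul2l; first by rewrite lee_fin.
by apply: ereal_sup_ubound; exists Y.
Qed.

Lemma powR_normB_le {R : realType} (p a b : R) : 0 <= p ->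
  `|a - b| `^ p <= 2 `^ p * (`|a| `^ p + `|b| `^ p).
Proof.
move=> p0; wlog ab : a b / `|b| <= `|a|.
  move=> H; have [ba|/ltW ba] := leP `|b| `|a|; first exact: H.
  by rewrite distrC [X in _ * X]addrC; exact: H.
apply: (@le_trans _ _ ((2 * `|a|) `^ p)).
  by apply: ge0_ler_powR; rewrite ?nnegrE ?mulr_ge0//; have := ler_normB a b; lra.
by rewrite powRM// ler_wpM2l ?powR_ge0// lerDl powR_ge0.
Qed.

Section LpFacts.
Context {R : realType} {X : choiceType} {p : R}.
Hypothesis p_gt0 : 0 < p.

Lemma lp_pow_ge0 (g : X -> R) : (0 <= lp_pow p g)%E.
Proof. by apply: esum_ge0 => x _; rewrite lee_fin powR_ge0. Qed.

Lemma lp_norm_ge0 (g : X -> R) : 0 <= lp_norm p g.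
Proof. exact: powR_ge0. Qed.

Lemma lp_norm0 : lp_norm p (fun _ : X => 0) = 0.
Proof.
rewrite /lp_norm /lp_pow esum1 ?powR0 ?invr_eq0 ?gt_eqF//.
by move=> x _; rewrite normr0 powR0 ?gt_eqF.
Qed.

Lemma lp_normB_id (g : X -> R) : lp_norm p (fun z => g z - g z) = 0.
Proof. by under eq_fun do rewrite subrr; exact: lp_norm0. Qed.

Lemma in_lp0 : in_lp p (fun _ : X => 0).
Proof.
rewrite /in_lp /lp_pow esum1 ?ltry// => x _.
by rewrite normr0 powR0 ?gt_eqF.
Qed.

Lemma lp_norm_powR (g : X -> R) : lp_norm p g `^ p = fine (lp_pow p g).
Proof.
by rewrite /lp_norm -powRrM mulVf ?gt_eqF// powRr1// fine_ge0// lp_pow_ge0.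
Qed.

Lemma in_lp_fin_num (g : X -> R) : in_lp p g -> lp_pow p g \is a fin_num.
Proof. by move=> gp; rewrite ge0_fin_numE// lp_pow_ge0. Qed.

Lemma in_lpB (g h : X -> R) : in_lp p g -> in_lp p h ->
  in_lp p (fun z => g z - h z).
Proof.
move=> /in_lp_fin_num/fineK gE /in_lp_fin_num/fineK hE.
apply: (@le_lt_trans _ _ (\esum_(z in [set: X])
   ((2 `^ p)%:E * ((`|g z| `^ p)%:E + (`|h z| `^ p)%:E)))%E).
  by apply: le_esum => z _; rewrite -EFinD -EFinM lee_fin powR_normB_le ?ltW.
have ge0 (a : R) : (0 <= (`|a| `^ p)%:E)%E by rewrite lee_fin powR_ge0.
apply: le_lt_trans (esumZl_le (2 `^ p) (fun z => (`|g z| `^ p)%:E + (`|h z| `^ p)%:E)%E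
  (powR_ge0 2 p) (fun z => adde_ge0 (ge0 _) (ge0 _))) _.
rewrite esumD => [|z _|z _] //.
by rewrite -[X in (_ * (X + _))%E]gE -[X in (_ * (_ + X))%E]hE -EFinD -EFinM ltry.
Qed.

End LpFacts.

Section Profile.
Context {R : realType} {X : choiceType} {d : X -> X -> R} {p : R}.
Hypotheses (d_metric : is_metric d) (p_gt0 : 0 < p).

Lemma lp_normB_le_eps_xi (xi : X -> X -> R) (e : R) x y :
  (eps_xi d p xi <= e%:E)%E ->
  lp_norm p (fun z => xi x z - xi y z) <= e * d x y.
Proof.
have [d_ge0 d_eq0 _ _] := d_metric; move=> xie.
have [<-|xy] := pselect (x = y).
  by rewrite lp_normB_id// (proj2 (d_eq0 x x))// mulr0.
have dxy_gt0 : 0 < d x y by rewrite lt_neqAle d_ge0 andbT eq_sym; apply/eqP => /d_eq0.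
rewrite -ler_pdivrMr// -lee_fin; apply: le_trans xie.
by apply: ereal_sup_ubound; exists x, y.
Qed.

Lemma lp_normB_ge1 (xi : X -> X -> R) (r : R) x y :
  (forall x, in_lp1 p (xi x)) -> (supp_radius d xi <= r%:E)%E ->
  2 * r < d x y -> 1 <= lp_norm p (fun z => xi x z - xi y z) `^ p.
Proof.
have [_ _ d_sym d_tri] := d_metric; move=> xi_unit xi_supp rxy.
have supp u z : xi u z != 0 -> d u z <= r.
  move=> uz; rewrite -lee_fin; apply: le_trans xi_supp.
  by apply: ereal_sup_ubound; exists u, z.
(* Disjoint supports: [|xi x z - xi y z| >= |xi x z|] for every z. *)
have [[xlp xnorm] [ylp _]] := (xi_unit x, xi_unit y).
apply: le_trans (_ : lp_norm p (xi x) `^ p <= _); first by rewrite xnorm powR1.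
rewrite [leLHS](lp_norm_powR p_gt0) [leRHS](lp_norm_powR p_gt0).
apply: fine_le.
- exact: in_lp_fin_num.
- by apply: in_lp_fin_num => //; exact: in_lpB.
apply: le_esum => z _; rewrite lee_fin.
have [->|yz] := eqVneq (xi y z) 0; first by rewrite subr0.
have [->|xz] := eqVneq (xi x z) 0; first by rewrite normr0 powR0 ?gt_eqF// powR_ge0.
have := supp _ _ yz; have := supp _ _ xz; have := d_tri x z y.
by rewrite (d_sym z y); lra.
Qed.

Lemma eps_profile_nonincreasing (S S' : R) : S <= S' ->
  (eps_profile d p S' <= eps_profile d p S)%E.
Proof.
move=> SS'; apply: ereal_inf_le_tmp => _ [xi [xi_unit xi_supp ->]].
by exists xi; split=> //; apply: le_trans xi_supp _; rewrite lee_fin.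
Qed.

Lemma exists_almost_optimal_xi (S : R) :
  (0 < eps_profile d p S < +oo)%E ->
  exists xi : X -> X -> R, [/\ forall x, in_lp1 p (xi x),
    (supp_radius d xi <= S%:E)%E &
    (eps_xi d p xi <= (2 * fine (eps_profile d p S))%:E)%E].
Proof.
move=> /andP[eps_gt0 eps_fin].
have epsE : eps_profile d p S = (fine (eps_profile d p S))%:E.
  by rewrite fineK// ge0_fin_numE// ltW.
have : (eps_profile d p S < (2 * fine (eps_profile d p S))%:E)%E.
  by move: eps_gt0; rewrite epsE !lte_fin; lra.
move=> /ereal_inf_lt[_ [xi [xi_unit xi_supp ->]] xi_eps].
by exists xi; split=> //; apply: ltW.
Qed.

End Profile.

Lemma measurable_preimage_cst_off_range {R : realType} (Y : Type)
    (a : nat -> R) (s : R -> Y) (y0 : Y) (D : set (measurableTypeR R)) :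
  measurable D -> (forall t, ~ range a t -> s t = y0) ->
  forall P : set Y, measurable (D `&` s @^-1` P).
Proof.
move=> mD s_out P.
have mrange : measurable (range a : set (measurableTypeR R)).
  rewrite (_ : range a = \bigcup_k [set a k]).
    by apply: bigcup_measurable => k _; exact: measurable_set1.
  by apply/seteqP; split=> [_ [k _ <-]|_ [k _ ->]]; exists k.
have -> : D `&` s @^-1` P = D `&` ((\bigcup_(k in [set k | P (s (a k))])
    [set (a k : measurableTypeR R)]) `|` (~` range a `&` [set _ | P y0])).
  apply/seteqP; split=> t [Dt Pt]; split=> //=.
    have [[k _ ak]|t_off] := pselect (range a t).
      by left; exists k; rewrite /= ?ak.
    by right; split=> //=; rewrite -(s_out t t_off).
  by case: Pt => [[k Pk ->]//|[t_off Py0]]; rewrite s_out.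
apply: measurableI => //; apply: measurableU.
  by apply: bigcup_measurable => k _; exact: measurable_set1.
apply: measurableI; first exact: measurableC.
have [Py0|Py0] := pselect (P y0).
  by rewrite (_ : [set _ | _] = setT)//; apply/seteqP; split.
by rewrite (_ : [set _ | _] = set0)//; apply/seteqP; split.
Qed.

Lemma lebesgue_stieltjes_measure_itv_oc {R : realType} (F : cumulative R R)
    (a b : R) : a <= b ->
  lebesgue_stieltjes_measure F `]a, b]%classic = (F b - F a)%:E.
Proof.
move=> ab; rewrite /lebesgue_stieltjes_measure /measure_extension.
by rewrite measurable_mu_extE/= ?wlength_itv_bnd//; exact: is_ocitv.
Qed.

Section StieltjesSeries.
Context {R : realType}.

Lemma measurable_fun_nonincreasing_on (h : R -> R) (c : R) :
  (forall s t, c <= s -> s <= t -> h t <= h s) ->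
  measurable_fun (`[c, +oo[ : set (measurableTypeR R)) h.
Proof.
move=> h_ni; apply: (eq_measurable_fun (fun t : measurableTypeR R => h (Num.max t c))).
  by move=> t; rewrite inE/= in_itv/= andbT => ct; rewrite max_l.
apply: nonincreasing_measurable => // s t st.
have c_le_max u : c <= Num.max u c by rewrite le_max lexx orbT.
by apply: h_ni => //; rewrite ge_max !le_max st lexx orbT.
Qed.

Context {F : cumulative R R} {p c : R} {g : R -> R} {a : nat -> R}.
Hypotheses (p_ge0 : 0 <= p) (a_nd : nondecreasing_seq a) (c_le_a0 : c <= a 0%N).
Hypotheses (g_ni : forall s t, c <= s -> s <= t -> g t <= g s)
  (g_ge0 : forall s, c <= s -> 0 <= g s).

Let c_le_a k : c <= a k.
Proof. exact: le_trans c_le_a0 (a_nd _ _ (leq0n k)). Qed.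

Lemma lebesgue_stieltjes_series_le_integral :
  (\sum_(k <oo) ((F (a k.+1) - F (a k)) * g (a k.+1) `^ p)%:E
   <= \int[lebesgue_stieltjes_measure F]_(S in `[c, +oo[) (g S `^ p)%:E)%E.
Proof.
pose I k : set (measurableTypeR R) := `]a k, a k.+1]%classic.
have I_sub k : I k `<=` `[c, +oo[.
  by move=> t; rewrite /= !in_itv/= andbT => /andP[/ltW/(le_trans (c_le_a k))].
have mG : measurable_fun (`[c, +oo[ : set (measurableTypeR R))
    (fun t => (g t `^ p)%:E).
  apply/measurable_EFinP.
  apply: measurable_fun_nonincreasing_on => s t cs st.
  have ct := le_trans cs st.
  by apply: ge0_ler_powR; rewrite ?nnegrE ?g_ge0 ?g_ni.
have G_ge0 t : (0 <= (g t `^ p)%:E)%E by rewrite lee_fin powR_ge0.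
have mI k : measurable (I k) by exact: measurable_itv.
have I_disj : trivIset setT I.
  move=> i j _ _ [t []]; rewrite /I/= !in_itv/= => /andP[ai ai1] /andP[aj aj1].
  have [ij|ji|//] := ltngtP i j.
    by have := le_lt_trans (le_trans ai1 (a_nd _ _ ij)) aj; rewrite ltxx.
  by have := le_lt_trans (le_trans aj1 (a_nd _ _ ji)) ai; rewrite ltxx.
have mGI : measurable_fun (\bigcup_k I k) (fun t => (g t `^ p)%:E).
  by apply: measurable_funS mG => // t [k _ /I_sub].
apply: (@le_trans _ _ (\int[lebesgue_stieltjes_measure F]_(S in \bigcup_k I k)
    (g S `^ p)%:E)%E); last first.
  apply: ge0_subset_integral => //; last by move=> t [k _ /I_sub].
  exact: bigcup_measurable.
rewrite ge0_integral_bigcup//.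
apply: lee_nneseries => k _.
  rewrite lee_fin mulr_ge0 ?powR_ge0// subr_ge0.
  by apply: cumulative_is_nondecreasing; exact: a_nd.
rewrite EFinM muleC -lebesgue_stieltjes_measure_itv_oc ?a_nd//.
rewrite -integral_cst//; apply: ge0_le_integral => //.
- by move=> t _; rewrite lee_fin powR_ge0.
- exact: measurable_funS (measurable_itv _) (I_sub k) mG.
- move=> t; rewrite /= in_itv/= => /andP[akt tak]; rewrite lee_fin.
  have ct := le_trans (c_le_a k) (ltW akt).
  by apply: ge0_ler_powR; rewrite ?nnegrE ?g_ge0 ?g_ni.
Qed.

End StieltjesSeries.

Section LpDistBounds.
Context {R : realType} {X : choiceType}.
Variables (mu : {measure set (measurableTypeR R) -> \bar R}) (p : R) (D : set R).
Variables (g h : R -> X -> R) (r : R).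
Hypotheses (p_gt0 : 0 < p) (r_ge0 : 0 <= r).

Let distp_itv :
  (\int[mu]_(t in D) (lp_norm p (fun y => g t y - h t y) `^ p)%:E)%E \in `[0, +oo]%E.
Proof. by rewrite in_itv/= leey andbT integral_ge0// => t _; rewrite lee_fin powR_ge0. Qed.

Let powR_itv : ((r `^ p)%:E \in `[0, +oo])%E.
Proof. by rewrite in_itv/= leey andbT lee_fin powR_ge0. Qed.

Let powR_pK : (r `^ p) `^ p^-1 = r.
Proof. by rewrite -powRrM mulfV ?gt_eqF// powRr1. Qed.

Lemma Lp_lp_dist_le :
  (\int[mu]_(t in D) (lp_norm p (fun y => g t y - h t y) `^ p)%:E <= (r `^ p)%:E)%E ->
  (Lp_lp_dist mu p D g h <= r%:E)%E.
Proof.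
by rewrite -[in X in _ -> X]powR_pK -poweR_EFin; apply: gt0_ler_poweR; rewrite ?invr_ge0 ?(ltW p_gt0).
Qed.

Lemma Lp_lp_dist_ge :
  ((r `^ p)%:E <= \int[mu]_(t in D) (lp_norm p (fun y => g t y - h t y) `^ p)%:E)%E ->
  (r%:E <= Lp_lp_dist mu p D g h)%E.
Proof.
by rewrite -[in X in _ -> X]powR_pK -poweR_EFin; apply: gt0_ler_poweR; rewrite ?invr_ge0 ?(ltW p_gt0).
Qed.

End LpDistBounds.

Section AtomicEmbedding.
Context {R : realType} {X : choiceType}.
Variables (p c : R) (x0 : X) (xi : nat -> X -> X -> R) (w : nat -> {nonneg R}).
Hypotheses (p_gt0 : 0 < p) (xi_lp : forall k x, in_lp p (xi k x)).

Definition atom (k : nat) : R := c + k%:R.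

Definition atom_index (t : R) : nat := Num.truncn (t - c).

Lemma atom_indexK : cancel atom atom_index.
Proof. by move=> k; rewrite /atom_index /atom addrAC subrr add0r natrK. Qed.

Lemma atom_in_itv k : `[c, +oo[%classic (atom k).
Proof. by rewrite /= in_itv/= andbT lerDl. Qed.

Definition atom_measure : {measure set (measurableTypeR R) -> \bar R} :=
  mseries (fun k => mscale (w k) \d_(atom k : measurableTypeR R)) 0.

Definition atomic_embedding (x : X) (t : R) : X -> R :=
  if t == atom (atom_index t) then
    fun z => xi (atom_index t) x z - xi (atom_index t) x0 z
  else fun=> 0.

Lemma atomic_embedding_atom x k :
  atomic_embedding x (atom k) = fun z => xi k x z - xi k x0 z.
Proof. by rewrite /atomic_embedding atom_indexK eqxx. Qed.

Lemma atomic_embedding_off x t : ~ range atom t -> atomic_embedding x t = fun=> 0.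
Proof.
move=> t_off; rewrite /atomic_embedding; case: eqP => // tE.
by case: t_off; exists (atom_index t).
Qed.

Lemma atomic_embedding_dichotomy x t :
  atomic_embedding x t = atomic_embedding x (atom (atom_index t)) \/
  atomic_embedding x t = fun=> 0.
Proof.
rewrite atomic_embedding_atom /atomic_embedding.
by case: ifP => _; [left|right].
Qed.

Lemma in_lp_atomic_embedding x t : in_lp p (atomic_embedding x t).
Proof.
rewrite /atomic_embedding; case: eqP => _; last exact: in_lp0.
exact: in_lpB.
Qed.

Lemma integral_atom_measure (h : R -> \bar R) (h0 : \bar R) :
  (forall t, 0 <= h t)%E -> (forall t, ~ range atom t -> h t = h0) ->
  (\int[atom_measure]_(t in `[c, +oo[) h t = \sum_(k <oo) (w k)%:num%:E * h (atom k))%E.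
Proof.
move=> h_ge0 h_off.
have mh : measurable_fun (`[c, +oo[ : set (measurableTypeR R)) h.
  by move=> _ Y _; apply: measurable_preimage_cst_off_range h_off _.
rewrite ge0_integral_measure_series//; apply: eq_eseriesr => k _.
rewrite ge0_integral_mscale// integral_dirac// diracE (mem_set (atom_in_itv k))//.
by rewrite mul1e.
Qed.

Lemma integral_atomic_embedding_dist x y :
  (\int[atom_measure]_(t in `[c, +oo[)
     (lp_norm p (fun z => atomic_embedding x t z - atomic_embedding y t z) `^ p)%:E
   = \sum_(k <oo)
     ((w k)%:num * lp_norm p (fun z => xi k x z - xi k y z) `^ p)%:E)%E.
Proof.
rewrite (integral_atom_measure _ 0%E).
- apply: eq_eseriesr => k _.
  rewrite (atomic_embedding_atom x) (atomic_embedding_atom y) EFinM.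
  suff -> : (fun z => xi k x z - xi k x0 z - (xi k y z - xi k x0 z)) =
    (fun z => xi k x z - xi k y z) by [].
  by apply: funext => z; rewrite opprB addrA subrK.
- by move=> t; rewrite lee_fin powR_ge0.
- move=> t t_off; rewrite (atomic_embedding_off x _ t_off) (atomic_embedding_off y _ t_off).
  by rewrite (lp_normB_id p_gt0 (fun=> 0)) powR0 ?gt_eqF.
Qed.

Lemma atomic_embedding_basepoint t : atomic_embedding x0 t = fun=> 0.
Proof.
rewrite /atomic_embedding; case: eqP => // _.
by apply: funext => z; rewrite subrr.
Qed.

Lemma strongly_measurable_atomic_embedding x :
  strongly_measurable atom_measure p `[c, +oo[ (atomic_embedding x).
Proof.
pose s n t := if (atom_index t <= n)%N then atomic_embedding x t else fun=> 0.
exists s; split=> [n|]; first split.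
- apply: (@sub_finite_set _ _
    ((fun k => atomic_embedding x (atom k)) @` `I_n.+1 `|` [set fun=> 0])).
    move=> _ [t _ <-]; rewrite /s; case: ifP => [tn|_]; last by right.
    have [->|->] := atomic_embedding_dichotomy x t; last by right.
    by left; exists (atom_index t).
  by rewrite finite_setU; split; [apply: finite_image; exact: finite_II|exact: finite_set1].
- move=> v; apply: (measurable_preimage_cst_off_range _ atom _ (fun=> 0)) => //.
  by move=> t t_off; rewrite /s atomic_embedding_off//; case: ifP.
- by move=> t _; rewrite /s; case: ifP => _; [exact: in_lp_atomic_embedding|exact: in_lp0].
- apply: aeW => t _; apply: cvg_near_cst; exists (atom_index t) => // n /= tn.
  by rewrite /s tn; exact: lp_normB_id.
Qed.

End AtomicEmbedding.

Section AtomicEmbeddingBounds.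
Context {R : realType} {X : choiceType} {d : X -> X -> R} {p c : R} {x0 : X}.
Context {xi : nat -> X -> X -> R} {w : nat -> {nonneg R}} {a e : nat -> R}.
Hypotheses (d_metric : is_metric d) (p_gt0 : 0 < p).
Hypotheses (xi_unit : forall k x, in_lp1 p (xi k x))
  (xi_supp : forall k, (supp_radius d (xi k) <= (a k)%:E)%E)
  (xi_eps : forall k, (eps_xi d p (xi k) <= (e k)%:E)%E) (e_ge0 : forall k, 0 <= e k).
Hypothesis weighted_eps_fin :
  (\sum_(k <oo) ((w k)%:num * e k `^ p)%:E < +oo)%E.

Let xi_lp k x : in_lp p (xi k x). Proof. by case: (xi_unit k x). Qed.

Let K := fine (\sum_(k <oo) ((w k)%:num * e k `^ p)%:E)%E.

Let KE : (\sum_(k <oo) ((w k)%:num * e k `^ p)%:E)%E = K%:E.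
Proof.
rewrite fineK// ge0_fin_numE// nneseries_ge0// => k _.
by rewrite lee_fin mulr_ge0 ?powR_ge0.
Qed.

Lemma integral_atomic_embedding_dist_le x y :
  (\int[atom_measure c w]_(t in `[c, +oo[)
     (lp_norm p (fun z => atomic_embedding c x0 xi x t z
                          - atomic_embedding c x0 xi y t z) `^ p)%:E
   <= ((K `^ p^-1 * d x y) `^ p)%:E)%E.
Proof.
have [d_ge0 _ _ _] := d_metric.
have wterm_ge0 k (r : R) : (0 <= ((w k)%:num * r `^ p)%:E)%E.
  by rewrite lee_fin mulr_ge0 ?powR_ge0.
rewrite integral_atomic_embedding_dist// powRM ?powR_ge0// -powRrM mulVf ?gt_eqF//.
have K_ge0 : 0 <= K by rewrite -lee_fin -KE nneseries_ge0.
rewrite powRr1// (mulrC K) EFinM -KE -nneseriesZl//.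
apply: lee_nneseries => // k _.
rewrite -EFinM lee_fin mulrCA ler_wpM2l// -powRM ?d_ge0//.
apply: ge0_ler_powR; rewrite ?nnegrE ?lp_norm_ge0 ?mulr_ge0 ?d_ge0 ?(ltW p_gt0)//.
by rewrite mulrC; exact: lp_normB_le_eps_xi.
Qed.

Lemma atomic_embedding_lipschitz x y :
  (Lp_lp_dist (atom_measure c w) p `[c, +oo[
     (atomic_embedding c x0 xi x) (atomic_embedding c x0 xi y)
   <= (K `^ p^-1 * d x y)%:E)%E.
Proof.
have [d_ge0 _ _ _] := d_metric.
by apply: Lp_lp_dist_le; rewrite ?mulr_ge0 ?powR_ge0// integral_atomic_embedding_dist_le.
Qed.

(* Since theta(x0) = 0, the L^p norm of theta(x) is its distance to theta(x0). *)
Lemma atomic_embedding_in_Lp_lp x :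
  in_Lp_lp (atom_measure c w) p `[c, +oo[ (atomic_embedding c x0 xi x).
Proof.
split=> [t _||]; first exact: in_lp_atomic_embedding.
  exact: strongly_measurable_atomic_embedding.
have normE t : lp_norm p (atomic_embedding c x0 xi x t) =
    lp_norm p (fun z => atomic_embedding c x0 xi x t z - atomic_embedding c x0 xi x0 t z).
  rewrite atomic_embedding_basepoint.
  by suff -> : (fun z => atomic_embedding c x0 xi x t z - 0) = atomic_embedding c x0 xi x t
    by []; apply: funext => z; rewrite subr0.
under eq_integral => t _ do rewrite normE.
by apply: le_lt_trans (integral_atomic_embedding_dist_le x x0) _; rewrite ltry.
Qed.

Lemma atomic_embedding_dist_ge x y n r : 0 <= r ->
  r `^ p <= \sum_(k < n.+1) (w k)%:num -> (forall k, (k <= n)%N -> 2 * a k < d x y) ->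
  (r%:E <= Lp_lp_dist (atom_measure c w) p `[c, +oo[
              (atomic_embedding c x0 xi x) (atomic_embedding c x0 xi y))%E.
Proof.
move=> r_ge0 r_le separated; apply: Lp_lp_dist_ge => //.
rewrite integral_atomic_embedding_dist//.
apply: le_trans (nneseries_lim_ge n.+1 _); last first.
  by move=> k _ _; rewrite lee_fin mulr_ge0 ?powR_ge0.
rewrite sumEFin lee_fin big_mkord; apply: le_trans r_le _.
apply: ler_sum => k _; rewrite ler_peMr//.
apply: (lp_normB_ge1 d_metric p_gt0 (xi k) (a k) x y (xi_unit k) (xi_supp k)).
by apply: separated; rewrite -ltnS.
Qed.

End AtomicEmbeddingBounds.

Definition dyadic {R : realType} (c : R) (k : nat) : R := c * 2 ^+ k.

Section Dyadic.
Context {R : realType} {c : R}.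
Hypothesis c_gt0 : 0 < c.

Lemma dyadic_nondecreasing : nondecreasing_seq (dyadic c).
Proof.
move=> m n mn; apply: ler_wpM2l; first exact: ltW.
by rewrite ler_eXn2l// ltr1n.
Qed.

Lemma dyadic_ge k : c <= dyadic c k.
Proof.
rewrite -[leLHS]mulr1; apply: ler_wpM2l; first exact: ltW.
by apply: exprn_ege1; rewrite ler1n.
Qed.

Lemma exists_dyadic_between (r : R) : c <= r ->
  exists n, r <= dyadic c n <= 2 * r.
Proof.
move=> c_le_r.
have r_bounded : exists n, r <= dyadic c n.
  have rc_ge0 : 0 <= r / c by rewrite divr_ge0 ?(ltW c_gt0)// (le_trans (ltW c_gt0)).
  exists (Num.bound (r / c)).
  have /ltW := archi_boundP rc_ge0; rewrite ler_pdivrMr// => /le_trans; apply.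
  rewrite /dyadic [leRHS]mulrC; apply: ler_wpM2r; first exact: ltW.
  by rewrite -natrX ler_nat ltnW// ltn_expl.
case: (ex_minnP r_bounded) => -[|m] r_le_m m_min.
  have r_ge0 : 0 <= r := le_trans (ltW c_gt0) c_le_r.
  by exists 0%N; rewrite r_le_m /= /dyadic expr0 mulr1; lra.
exists m.+1; rewrite r_le_m /=.
have : ~~ (r <= dyadic c m) by apply/negP => /m_min; rewrite ltnn.
by rewrite -ltNge /dyadic exprS mulrCA; lra.
Qed.

End Dyadic.

Definition increments {R : realType} (u : nat -> R) (k : nat) : R :=
  if k is k'.+1 then u k - u k' else u 0%N.

Lemma sum_increments {R : realType} (u : nat -> R) n :
  \sum_(k < n.+1) increments u k = u n.
Proof.
rewrite big_ord_recl/= (eq_bigr (fun k : 'I_n => u k.+1 - u k))//.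
by rewrite -(big_mkord xpredT (fun k => u k.+1 - u k)) telescope_sumr// addrC subrK.
Qed.

Lemma increments_ge0 {R : realType} (u : nat -> R) :
  nondecreasing_seq u -> 0 <= u 0%N -> forall k, 0 <= increments u k.
Proof. by move=> u_nd u0_ge0 [|k]//=; rewrite subr_ge0 u_nd. Qed.

(* The factor 8: for t >= 8c some dyadic scale a_n lies in [t/8, t/4], so 2 a_n < t. *)
Definition compression {R : realType} (f : R -> R) (c t : R) : R :=
  if 8 * c <= t then f (t / 8) else 0.

Section Compression.
Context {R : realType} (f : R -> R) (c : R).
Hypotheses (f_ge0 : forall t, c <= t -> 0 <= f t)
  (f_nd : forall s t, c <= s -> s <= t -> f s <= f t).

Lemma compression_ge0 t : 0 <= compression f c t.
Proof. by rewrite /compression; case: ifPn => // ct; apply: f_ge0; lra. Qed.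

Lemma compression_nondecreasing s t : s <= t -> compression f c s <= compression f c t.
Proof.
rewrite /compression => st; case: ifPn => cs; case: ifPn => ct.
- by apply: f_nd; lra.
- by move: ct; rewrite (le_trans cs st).
- by apply: f_ge0; lra.
- by [].
Qed.

Lemma succeq_compression : succeq (compression f c) f.
Proof.
exists 1, 8^-1; split=> //; exists (8 * c) => t ct.
by rewrite /compression ct mul1r mulrC.
Qed.

End Compression.

Lemma rc_pow_ge {R : realType} (f : R -> R) (p c t : R) : 0 <= p ->
  (forall t, c <= t -> 0 <= f t) -> (forall s t, c <= s -> s <= t -> f s <= f t) ->
  c <= t -> f t `^ p <= rc_pow f p c t.
Proof.
move=> p_ge0 f_ge0 f_nd ct; apply: lb_le_inf.
  by exists (f (Num.max (t + 1) c) `^ p), (t + 1); rewrite //= in_itv/= andbT ltrDl.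
move=> _ [s + <-]; rewrite /= in_itv/= andbT => ts.
have cs := le_trans ct (ltW ts).
by rewrite max_l//; apply: ge0_ler_powR; rewrite ?nnegrE ?f_ge0 ?f_nd// ltW.
Qed.

Section DyadicEmbedding.
Context {R : realType} {X : choiceType} {d : X -> X -> R} {p c : R} {f : R -> R}.
Context {F : cumulative R R}.
Hypotheses (d_metric : is_metric d) (p_gt0 : 0 < p) (c_gt0 : 0 < c).
Hypothesis eps_fin : forall S, c <= S -> (0 < eps_profile d p S < +oo)%E.
Hypotheses (f_ge0 : forall t, c <= t -> 0 <= f t)
  (f_nd : forall s t, c <= s -> s <= t -> f s <= f t)
  (FE : forall t, F t = rc_pow f p c t).

Let profile S := fine (eps_profile d p S).

Let profileE S : c <= S -> eps_profile d p S = (profile S)%:E.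
Proof.
by move=> cS; have /andP[eps_gt0 eps_lt] := eps_fin _ cS; rewrite fineK// ge0_fin_numE// ltW.
Qed.

Lemma fine_eps_profile_gt0 S : c <= S -> 0 < profile S.
Proof. by move=> cS; rewrite -lte_fin -profileE//; case/andP: (eps_fin _ cS). Qed.

Let profile_nonincreasing s t : c <= s -> s <= t -> profile t <= profile s.
Proof.
move=> cs st; rewrite -lee_fin -!profileE//; last exact: le_trans st.
exact: eps_profile_nonincreasing.
Qed.

Lemma exists_dyadic_family : exists xi : nat -> X -> X -> R, forall k,
  [/\ forall x, in_lp1 p (xi k x), (supp_radius d (xi k) <= (dyadic c k)%:E)%E &
      (eps_xi d p (xi k) <= (2 * profile (dyadic c k))%:E)%E].
Proof.
have [xi xi_spec] := choice (fun k => exists_almost_optimal_xi _ (eps_fin _ (dyadic_ge c_gt0 k))).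
by exists xi.
Qed.

Lemma F_ge_powR t : c <= t -> f t `^ p <= F t.
Proof. by rewrite FE; apply: rc_pow_ge; rewrite ?ltW. Qed.

Lemma dyadic_increments_ge0 k : 0 <= increments (F \o dyadic c) k.
Proof.
apply: increments_ge0 => [m n mn|]; first exact/cumulative_is_nondecreasing/(dyadic_nondecreasing c_gt0).
by apply: le_trans (F_ge_powR _ (dyadic_ge c_gt0 0)); exact: powR_ge0.
Qed.

Context {w : nat -> {nonneg R}}.
Hypothesis w_increments : forall k, (w k)%:num = increments (F \o dyadic c) k.

Hypothesis int_fin :
  (\int[lebesgue_stieltjes_measure F]_(S in `[c, +oo[) (profile S `^ p)%:E < +oo)%E.

Lemma weighted_profile_series_fin :
  (\sum_(k <oo) ((w k)%:num * (2 * profile (dyadic c k)) `^ p)%:E < +oo)%E.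
Proof.
have term_ge0 k : (0 <= ((w k)%:num * profile (dyadic c k) `^ p)%:E)%E.
  by rewrite lee_fin mulr_ge0 ?powR_ge0.
apply: (@le_lt_trans _ _ (\sum_(k <oo)
    ((2 `^ p)%:E * ((w k)%:num * profile (dyadic c k) `^ p)%:E))%E).
  apply: lee_nneseries => k _; first by rewrite lee_fin mulr_ge0 ?powR_ge0.
  rewrite -EFinM powRM ?ler0n ?(ltW (fine_eps_profile_gt0 _ (dyadic_ge c_gt0 k)))//.
  by rewrite mulrCA.
rewrite nneseriesZl// nneseries_recl// -nneseries_addn//.
have tail_le : (\sum_(k <oo) ((w (k + 1)%N)%:num * profile (dyadic c (k + 1)%N) `^ p)%:E
    <= \int[lebesgue_stieltjes_measure F]_(S in `[c, +oo[) (profile S `^ p)%:E)%E.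
  under eq_eseriesr => k _ do rewrite addn1 w_increments.
  apply: lebesgue_stieltjes_series_le_integral (dyadic_ge c_gt0 0%N) _ _.
  - exact: ltW.
  - exact: dyadic_nondecreasing.
  - exact: profile_nonincreasing.
  - by move=> s cs; apply/ltW/fine_eps_profile_gt0.
apply: lte_mul_pinfty; rewrite ?powR_ge0//.
by apply: lte_add_pinfty; [exact: ltry | exact: le_lt_trans tail_le int_fin].
Qed.

Lemma compression_le_atomic_embedding_dist (x0 : X) (xi : nat -> X -> X -> R) :
  (forall k x, in_lp1 p (xi k x)) ->
  (forall k, supp_radius d (xi k) <= (dyadic c k)%:E)%E ->
  forall x y, ((compression f c (d x y))%:E <= Lp_lp_dist (atom_measure c w) p
     `[c, +oo[ (atomic_embedding c x0 xi x) (atomic_embedding c x0 xi y))%E.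
Proof.
move=> xi_unit xi_supp x y; rewrite /compression; case: ifPn => [c8|_]; last exact: poweR_ge0.
have c_le_r : c <= d x y / 8 by lra.
have [n /andP[r_le a_le]] := exists_dyadic_between c_gt0 _ c_le_r.
apply: (atomic_embedding_dist_ge d_metric p_gt0 xi_unit xi_supp _ _ n).
- by apply: f_ge0; lra.
- under eq_bigr => k _ do rewrite w_increments.
  rewrite sum_increments /=; apply: le_trans (F_ge_powR _ (dyadic_ge c_gt0 n)).
  by apply: ge0_ler_powR; rewrite ?nnegrE ?(ltW p_gt0) ?f_ge0 ?f_nd// (le_trans c_le_r).
- move=> k kn; have := dyadic_nondecreasing c_gt0 _ _ kn.
  have := lt_le_trans c_gt0 c_le_r; lra.
Qed.

End DyadicEmbedding.

Theorem corollary2p4p4 (R : realType) (X : choiceType) (d : X -> X -> R)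
  (p c : R) (f : R -> R) (F : cumulative R R) :
  is_metric d ->
  1 <= p -> 0 < c ->
  (forall S, c <= S -> (0 < eps_profile d p S < +oo)%E) ->
  (forall S, c <= S -> 0 <= f S) ->
  (forall s t, c <= s -> s <= t -> f s <= f t) ->
  (forall t, F t = rc_pow f p c t) ->
  (\int[lebesgue_stieltjes_measure F]_(S in `[c, +oo[)
      ((fine (eps_profile d p S)) `^ p)%:E < +oo)%E ->
  exists (mu : {measure set (measurableTypeR R) -> \bar R})
         (theta : X -> R -> X -> R) (rho : R -> R),
    [/\ (forall x, in_Lp_lp mu p `[c, +oo[ (theta x)),
        (exists L : R, 0 <= L /\ forall x y,
            (Lp_lp_dist mu p `[c, +oo[ (theta x) (theta y) <= (L * d x y)%:E)%E),
        (forall s t, 0 <= s -> s <= t -> rho s <= rho t) /\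
          (forall t, 0 <= t -> 0 <= rho t),
        succeq rho f &
        (forall x y,
            ((rho (d x y))%:E <= Lp_lp_dist mu p `[c, +oo[ (theta x) (theta y))%E)].
Proof.
move=> d_metric p_ge1 c_gt0 eps_fin f_ge0 f_nd FE int_fin.
have p_gt0 : 0 < p := lt_le_trans ltr01 p_ge1.
pose w k := NngNum (dyadic_increments_ge0 p_gt0 c_gt0 f_ge0 f_nd FE k).
have w_increments k : (w k)%:num = increments (F \o dyadic c) k by [].
have [xi /all_and3[xi_unit xi_supp xi_eps]] := exists_dyadic_family c_gt0 eps_fin.
have e_ge0 k : 0 <= 2 * fine (eps_profile d p (dyadic c k)).
  by apply/mulr_ge0/ltW/(fine_eps_profile_gt0 eps_fin)/dyadic_ge.
have eps_series_fin := weighted_profile_series_fin p_gt0 c_gt0 eps_fin w_increments int_fin.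
have compression_mono : (forall s t, 0 <= s -> s <= t -> compression f c s <= compression f c t)
    /\ (forall t, 0 <= t -> 0 <= compression f c t).
  by split=> [s t _|t _]; [exact: compression_nondecreasing|exact: compression_ge0].
have [[x0 _]|X0] := pselect (exists x : X, True); last first.
  exists (atom_measure c w), (fun _ _ _ => 0), (compression f c).
  split=> //; first by move=> x; case: X0; exists x.
  - by exists 0; split=> // x; case: X0; exists x.
  - exact: succeq_compression.
  - by move=> x; case: X0; exists x.
exists (atom_measure c w), (atomic_embedding c x0 xi), (compression f c); split.
- exact: atomic_embedding_in_Lp_lp d_metric p_gt0 xi_unit xi_eps e_ge0 eps_series_fin.
- eexists; split; last exact: atomic_embedding_lipschitz d_metric p_gt0 xi_eps e_ge0 eps_series_fin.
  exact: powR_ge0.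
- exact: compression_mono.
- exact: succeq_compression.
- move=> x y; apply: (compression_le_atomic_embedding_dist d_metric p_gt0 c_gt0 f_ge0 f_nd FE
    w_increments x0 xi xi_unit xi_supp).
Qed.
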